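(* Let $i\ge0$, $l\ge1$, $j\ge0$, $j_1,\ldots,j_l\ge0$ and $k\ge0$ be integers. Then (a) $\displaystyle b_{i,j_1+\cdots+j_l,k}=\sum\binom{i}{i_1,\ldots,i_{l+k}}\prod_{r=1}^{l}b_{i_r,j_r,0}$, the sum being over all integers $i_1,\ldots,i_{l+k}\ge0$ with $i_1+\cdots+i_{l+k}=i$; (b) $\displaystyle b_{i,j,k}=\sum\binom{i}{i_1,\ldots,i_{j+k}}$, the sum being over all integers $i_1,\ldots,i_{j+k}\ge0$ with $i_1+\cdots+i_{j+k}=i$ and $i_1>0,\ldots,i_j>0$.
   Context: For integers $i\ge0$, $j\ge0$ and real $k$, $b_{i,j,k}=\sum_{r=0}^{j}\binom{j}{r}(-1)^{j-r}(r+k)^i$, with the convention $0^0=1$. $\binom{i}{i_1,\ldots,i_n}=\frac{i!}{i_1!\cdots i_n!}$ is the multinomial coefficient. *)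

From HB Require Import structures.
From mathcomp Require Import all_boot all_order all_algebra.
From mathcomp Require Import reals.
Set Implicit Arguments. Unset Strict Implicit. Unset Printing Implicit Defensive.
Import Order.TTheory GRing.Theory Num.Theory.
Local Open Scope ring_scope.

(* b_{i,j,k} = \sum_{r=0}^{j} C(j,r) (-1)^{j-r} (r+k)^i, with 0^0 = 1
   (automatic for x ^+ 0 = 1). *)
Definition bcoef (R : realType) (i j : nat) (k : R) : R :=
  \sum_(r < j.+1) ('C(j, r))%:R * (-1) ^+ (j - r) * (r%:R + k) ^+ i.

Definition multinom (i n : nat) (t : 'I_n -> nat) : nat :=
  (i`! %/ \prod_(r < n) (t r)`!)%N.

From HB Require Import structures.
From mathcomp Require Import all_boot all_order all_algebra.
From mathcomp Require Import reals ring.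
Set Implicit Arguments. Unset Strict Implicit. Unset Printing Implicit Defensive.
Import Order.TTheory GRing.Theory Num.Theory.
Local Open Scope ring_scope.

(* Since b_{i,j,k} is the j-th forward difference of x^i at x = k, its exponential
   generating function in i is (e^x - 1)^j e^(kx).  Multiplying such series adds the
   j's and the k's, and the coefficient of x^i/i! in a product of l + k exponential
   generating functions is a multinomial sum; (a) is this for the factors
   (e^x - 1)^(j_r) and k copies of e^x, and (b) follows from (a) with all j_r = 1,
   because b_{i,1,0} = [i > 0].  The series are truncated at degree i, and the
   product rule becomes the binomial convolution identity [bcoef_binconv]. *)

Lemma prod_fact_dvdn_fact_sum n (f : 'I_n -> nat) :
  (\prod_(r < n) (f r)`! %| (\sum_(r < n) f r)`!)%N.
Proof.
elim: n f => [|n IHn] f; first by rewrite !big_ord0.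
rewrite !big_ord_recr /=; set S := (\sum_(r < n) _)%N.
have := bin_fact (leq_addl S (f ord_max)); rewrite addnK => <-.
by rewrite mulnC dvdn_mull // dvdn_mul.
Qed.

Definition ord_cat T m n (f : 'I_m -> T) (g : 'I_n -> T) (r : 'I_(m + n)) : T :=
  match split r with inl x => f x | inr y => g y end.

Lemma ord_cat_lshift T m n (f : 'I_m -> T) (g : 'I_n -> T) r :
  ord_cat f g (lshift n r) = f r.
Proof. by rewrite /ord_cat (unsplitK (inl _ r)). Qed.

Lemma ord_cat_rshift T m n (f : 'I_m -> T) (g : 'I_n -> T) r :
  ord_cat f g (rshift m r) = g r.
Proof. by rewrite /ord_cat (unsplitK (inr _ r)). Qed.

Section TruncatedExponentialGeneratingFunctions.
Variable F : fieldType.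

Definition expgen N (a : nat -> F) : {poly F} := \poly_(s < N.+1) (a s / s`!%:R).

Definition binconv (a b : nat -> F) m : F :=
  \sum_(p < m.+1) 'C(m, p)%:R * a p * b (m - p)%N.

Definition eq_upto N (p q : {poly F}) := forall m, (m <= N)%N -> p`_m = q`_m.

Lemma eq_upto_trans N p q s : eq_upto N p q -> eq_upto N q s -> eq_upto N p s.
Proof. by move=> Epq Eqs m le_mN; rewrite Epq ?Eqs. Qed.

Lemma eq_uptoM N p p' q q' :
  eq_upto N p p' -> eq_upto N q q' -> eq_upto N (p * q) (p' * q').
Proof.
move=> Ep Eq m le_mN; rewrite !coefM; apply: eq_bigr => s _.
have le_sm : (s <= m)%N by rewrite -ltnS.
by rewrite Ep ?Eq ?(leq_trans (leq_subr _ _) le_mN) ?(leq_trans le_sm le_mN).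
Qed.

Lemma binconvBl a a1 a2 b m :
  a =1 a1 \- a2 -> binconv a b m = binconv a1 b m - binconv a2 b m.
Proof. by move=> Ea; rewrite -sumrB; apply: eq_bigr => p _; rewrite Ea /=; ring. Qed.

Lemma binconvBr a b b1 b2 m :
  b =1 b1 \- b2 -> binconv a b m = binconv a b1 m - binconv a b2 m.
Proof. by move=> Eb; rewrite -sumrB; apply: eq_bigr => p _; rewrite Eb /=; ring. Qed.

Lemma coef_prod_expgen N n (a : 'I_n -> nat -> F) :
  (\prod_(r < n) expgen N (a r))`_N =
  \sum_(t : {ffun 'I_n -> 'I_N.+1} | (\sum_(r < n) (t r : nat))%N == N)
     \prod_(r < n) (a r (t r) / (t r)`!%:R).
Proof.
under eq_bigr => r _ do rewrite /expgen poly_def.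
rewrite bigA_distr_bigA /= coef_sum [RHS]big_mkcond /=; apply: eq_bigr => t _.
under eq_bigr => r _ do rewrite -mul_polyC.
rewrite big_split /= -rmorph_prod prodrXr mul_polyC coefZ coefXn eq_sym.
by case: eqP; rewrite ?mulr1 ?mulr0.
Qed.

Hypothesis F_char0 : [pchar F] =i pred0.

Lemma natf_fact_neq0 n : n`!%:R != 0 :> F.
Proof. by rewrite (pcharf0P _).1 // -lt0n fact_gt0. Qed.

Lemma natf_multinom N n (t : 'I_n -> nat) : (\sum_(r < n) t r)%N = N ->
  (multinom N t)%:R = N`!%:R / \prod_(r < n) (t r)`!%:R :> F.
Proof.
move=> sum_t; rewrite /multinom pchar0_natf_div ?natr_prod //.
by rewrite -sum_t prod_fact_dvdn_fact_sum.
Qed.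

Lemma expgenM N a b : eq_upto N (expgen N a * expgen N b) (expgen N (binconv a b)).
Proof.
move=> m le_mN; rewrite coefM coef_poly ltnS le_mN mulr_suml.
apply: eq_bigr => p _; have le_pm : (p <= m)%N by rewrite -ltnS.
rewrite !coef_poly ltnS (leq_trans le_pm le_mN) ltnS (leq_trans (leq_subr _ _) le_mN).
rewrite -(bin_fact le_pm) !natrM.
have binm_neq0 : 'C(m, p)%:R != 0 :> F by rewrite (pcharf0P _).1 // -lt0n bin_gt0.
by field; rewrite !natf_fact_neq0 binm_neq0.
Qed.

End TruncatedExponentialGeneratingFunctions.

Section BCoefficients.
Variable R : realType.
Implicit Types k : R.

Let R_char0 : [pchar R] =i pred0.
Proof. exact: pchar_num. Qed.

Lemma bcoef_j0 i k : bcoef i 0 k = k ^+ i.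
Proof. by rewrite /bcoef big_ord1 /= bin0 mul1r expr0 mul1r add0r. Qed.

Lemma bcoef_jS i j k : bcoef i j.+1 k = bcoef i j (k + 1) - bcoef i j k.
Proof.
rewrite /bcoef big_ord_recl /= bin0 subn0.
under eq_bigr => r _ do rewrite /bump /= add1n binS natrD !mulrDl.
rewrite big_split /= [X in _ + X]addrC addrCA; congr (_ + _).
  by apply: eq_bigr => r _; rewrite subSS -natr1 -addrA [1 + k]addrC.
rewrite big_ord_recr /= bin_small // !mul0r addr0.
rewrite [in RHS]big_ord_recl /= bin0 subn0 opprD -sumrN; congr (_ + _).
  by rewrite exprS !mulN1r !mul1r add0r mulNr.
apply: eq_bigr => r _; rewrite /bump /= add1n subSS.
by rewrite -(subnSK (ltn_ord r)) exprS; ring.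
Qed.

Lemma bcoef_j1_k0 i : bcoef i 1 (0 : R) = (0 < i)%N%:R.
Proof.
rewrite /bcoef !big_ord_recr big_ord0 /= !addr0 add0r bin0 bin1 subn0 expr1.
by case: i => [|i]; rewrite ?expr0 ?expr0n ?expr1n /=; ring.
Qed.

Lemma bcoef_binconv j1 j2 k1 k2 m :
  binconv (fun s => bcoef s j1 k1) (fun s => bcoef s j2 k2) m =
  bcoef m (j1 + j2) (k1 + k2).
Proof.
elim: j1 k1 => [|j1 IHj1] k1; last first.
  by rewrite (binconvBl _ _ (fun s => bcoef_jS s j1 k1)) !IHj1 addSn bcoef_jS addrAC.
elim: j2 k2 => [|j2 IHj2] k2; last first.
  by rewrite (binconvBr _ _ (fun s => bcoef_jS s j2 k2)) !IHj2 bcoef_jS addrA.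
rewrite bcoef_j0 addrC exprDn; apply: eq_bigr => p _.
by rewrite !bcoef_j0 -mulr_natl; ring.
Qed.

Lemma prod_expgen_bcoef N n (jj : 'I_n -> nat) (kk : 'I_n -> R) :
  eq_upto N (\prod_(r < n) expgen N (fun s => bcoef s (jj r) (kk r)))
            (expgen N (fun s => bcoef s (\sum_(r < n) jj r) (\sum_(r < n) kk r))).
Proof.
elim: n jj kk => [|n IHn] jj kk.
  rewrite !big_ord0 => m le_mN; rewrite coef_poly ltnS le_mN bcoef_j0 coefC.
  by case: m le_mN => [|m] _; rewrite ?fact0 ?divr1 // expr0n mul0r.
rewrite big_ord_recr /= (big_ord_recr n jj) (big_ord_recr n kk) /=.
apply: eq_upto_trans (eq_uptoM (IHn _ _) (fun m _ => erefl)) _.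
apply: eq_upto_trans (expgenM R_char0 _ _) _ => m _.
by rewrite !coef_poly bcoef_binconv.
Qed.

Lemma bcoef_sum_multinom N n (jj : 'I_n -> nat) (kk : 'I_n -> R) :
  bcoef N (\sum_(r < n) jj r) (\sum_(r < n) kk r) =
  \sum_(t : {ffun 'I_n -> 'I_N.+1} | (\sum_(r < n) (t r : nat))%N == N)
     (multinom N (fun r => (t r : nat)))%:R * \prod_(r < n) bcoef (t r) (jj r) (kk r).
Proof.
have := prod_expgen_bcoef jj kk (leqnn N).
rewrite coef_prod_expgen coef_poly ltnSn => Ecoef.
rewrite -[LHS](divfK (natf_fact_neq0 R_char0 N)) -Ecoef mulr_suml.
apply: eq_bigr => t /eqP sum_t; rewrite prodf_div natf_multinom //; field.
by rewrite -natr_prod (pcharf0P _).1 // -lt0n prodn_gt0 // => r; exact: fact_gt0.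
Qed.

Lemma bcoef_multinom_shift N n (jj : 'I_n -> nat) (k : nat) :
  bcoef N (\sum_(r < n) jj r) k%:R =
  \sum_(t : {ffun 'I_(n + k) -> 'I_N.+1} | (\sum_(r < n + k) (t r : nat))%N == N)
     (multinom N (fun r => (t r : nat)))%:R *
     \prod_(r < n) bcoef (t (lshift k r)) (jj r) (0 : R).
Proof.
pose jj' := ord_cat jj (fun _ : 'I_k => 0%N).
pose kk' := ord_cat (fun _ : 'I_n => 0 : R) (fun _ : 'I_k => 1).
have sum_jj' : (\sum_(r < n + k) jj' r)%N = (\sum_(r < n) jj r)%N.
  rewrite /jj' big_split_ord /= [X in (_ + X)%N]big1 ?addn0 => [|r _].
    by apply: eq_bigr => r _; rewrite ord_cat_lshift.
  by rewrite ord_cat_rshift.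
have sum_kk' : \sum_(r < n + k) kk' r = k%:R.
  rewrite /kk' big_split_ord /= big1 ?add0r => [|r _]; last by rewrite ord_cat_lshift.
  under eq_bigr => r _ do rewrite ord_cat_rshift.
  by rewrite sumr_const card_ord.
rewrite -sum_jj' -sum_kk' bcoef_sum_multinom; apply: eq_bigr => t _; congr (_ * _).
rewrite /jj' /kk' big_split_ord /= [X in _ * X]big1 ?mulr1 => [|r _].
  by apply: eq_bigr => r _; rewrite !ord_cat_lshift.
by rewrite !ord_cat_rshift bcoef_j0 expr1n.
Qed.

End BCoefficients.

Theorem mainTheorem19 (R : realType) (i l j : nat) (js : 'I_l -> nat) (k : nat) :
  (1 <= l)%N ->
  (* (a) *)
  (bcoef i (\sum_(r < l) js r)%N (k%:R : R) =
     \sum_(t : {ffun 'I_(l + k) -> 'I_i.+1} | (\sum_(r < l + k) (t r : nat))%N == i)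
        (multinom i (fun r => (t r : nat)))%:R *
        \prod_(r < l) bcoef (t (lshift k r)) (js r) (0 : R))
  /\
  (* (b) *)
  (bcoef i j (k%:R : R) =
     \sum_(t : {ffun 'I_(j + k) -> 'I_i.+1} |
             ((\sum_(r < j + k) (t r : nat))%N == i) &&
             [forall r : 'I_j, (0 < t (lshift k r))%N])
        (multinom i (fun r => (t r : nat)))%:R).
Proof.
(* (a) holds for l = 0 as well. *)
move=> _; split; first exact: bcoef_multinom_shift.
have sum_ones : (\sum_(r < j) 1)%N = j by rewrite sum_nat_const card_ord muln1.
rewrite -{1}sum_ones bcoef_multinom_shift big_mkcondr; apply: eq_bigr => t _.
under eq_bigr => r _ do rewrite bcoef_j1_k0.
case: ifPn => [/forallP t_pos | /forallPn[r t_r0]].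
  by rewrite big1 ?mulr1 => [|r _]; rewrite ?t_pos.
by rewrite (bigD1 r) //= (negbTE t_r0) mul0r mulr0.
Qed.
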